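(* Let $(\Lambda,\Pi,\perp,\mathrm{push})$ be a realizability lattice equipped with a map $\mathrm{app}:\Lambda\times\Lambda\to\Lambda$, $(t,s)\mapsto ts$. The following are equivalent: (1) for all $t,s\in\Lambda$, $\pi\in\Pi$: if $t\perp s\cdot\pi$ then $ts\perp\pi$; (2) $P\ast L\subseteq P\,\clubsuit\,L$ for all $L\subseteq\Lambda$, $P\subseteq\Pi$; (3) $P\ast_\perp L\subseteq P\,\clubsuit\,L$ for all $L\subseteq\Lambda$, $P\subseteq\Pi$; (4) for all $P\subseteq\Pi$, $L\subseteq\Lambda$: if $t\in{}^\perp P$ and $\ell\in L$ then $t\ell$ is orthogonal to every element of $P\ast L$ (and hence to every element of $P\ast_\bullet L\subseteq P\ast L$).
   Context: A realizability lattice consists of sets $\Lambda,\Pi$, a relation $\perp\subseteq\Lambda\times\Pi$ (write $t\perp\pi$) and a map $\mathrm{push}:\Lambda\times\Pi\to\Pi$, written $t\cdot\pi$. Polars: $L^\perp=\{\pi:\forall t\in L,\ t\perp\pi\}$, ${}^\perp P=\{t:\forall\pi\in P,\ t\perp\pi\}$; $\overline P=({}^\perp P)^\perp$. Define $P\ast L=\{\pi\in\Pi: t\cdot\pi\in P\ \forall t\in L\}$, $P\ast_\perp L=\overline{P\ast L}$, $P\ast_\bullet L=\{\pi\in\Pi:t\cdot\pi'\in P\ \forall t\in L,\ \pi'\in\overline{\{\pi\}}\}$, and $P\,\clubsuit\,L=(\{t\ell: t\in{}^\perp P,\ \ell\in L\})^\perp$. *)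

Set Implicit Arguments.

Section RealizabilityLattice.
Variables (Lam Pi : Type) (perp : Lam -> Pi -> Prop) (push : Lam -> Pi -> Pi).

Definition polL (L : Lam -> Prop) : Pi -> Prop :=
  fun pi => forall t, L t -> perp t pi.
Definition polP (P : Pi -> Prop) : Lam -> Prop :=
  fun t => forall pi, P pi -> perp t pi.
Definition closP (P : Pi -> Prop) : Pi -> Prop := polL (polP P).

Definition star (P : Pi -> Prop) (L : Lam -> Prop) : Pi -> Prop :=
  fun pi => forall t, L t -> P (push t pi).
Definition star_perp (P : Pi -> Prop) (L : Lam -> Prop) : Pi -> Prop :=
  closP (star P L).
Definition star_bullet (P : Pi -> Prop) (L : Lam -> Prop) : Pi -> Prop :=
  fun pi => forall t pi', L t -> closP (fun x => x = pi) pi' -> P (push t pi').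
Definition club (app : Lam -> Lam -> Lam) (P : Pi -> Prop) (L : Lam -> Prop)
  : Pi -> Prop :=
  polL (fun u => exists t l, polP P t /\ L l /\ u = app t l).

End RealizabilityLattice.


(* If [t ⊥ s·π] implies [ts ⊥ π], then for [t ∈ ⊥P] and [ℓ ∈ L] the application
   [tℓ] is orthogonal to [P ∗ L], hence to its closure [P ∗⊥ L], which contains
   both [P ∗ L] and [P ∗• L]; this gives (1) ⇒ (2), (3), (4). Conversely each of
   (2), (3), (4) yields [P ∗ L ⊆ P ♣ L], and applying this to the singletons
   [L = {s}], [P = {s·π}] gives back (1). *)

Section RealizabilityLattice.
Context {Lam Pi : Type} {perp : Lam -> Pi -> Prop} {push : Lam -> Pi -> Pi}
  {app : Lam -> Lam -> Lam}.

Lemma closP_ext {P : Pi -> Prop} {pi : Pi} : P pi -> closP perp P pi.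
Proof. intros HP t Ht. exact (Ht pi HP). Qed.

Lemma star_sub_star_perp {P : Pi -> Prop} {L : Lam -> Prop} {pi : Pi} :
  star push P L pi -> star_perp perp push P L pi.
Proof. apply closP_ext. Qed.

Lemma star_bullet_sub_star {P : Pi -> Prop} {L : Lam -> Prop} {pi : Pi} :
  star_bullet perp push P L pi -> star push P L pi.
Proof.
  intros Hb t Ht. apply (Hb t pi Ht).
  apply closP_ext. reflexivity.
Qed.

Section AppPush.
Hypothesis app_push :
  forall (t s : Lam) (pi : Pi), perp t (push s pi) -> perp (app t s) pi.

Lemma app_polP_star {P : Pi -> Prop} {L : Lam -> Prop} {t l : Lam} :
  polP perp P t -> L l -> polP perp (star push P L) (app t l).
Proof. intros Ht Hl pi Hs. apply app_push, Ht, Hs, Hl. Qed.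

Lemma star_perp_sub_club {P : Pi -> Prop} {L : Lam -> Prop} {pi : Pi} :
  star_perp perp push P L pi -> club perp app P L pi.
Proof.
  intros Hs u [t [l [Ht [Hl ->]]]].
  exact (Hs (app t l) (app_polP_star Ht Hl)).
Qed.

End AppPush.

Lemma app_push_of_star_sub_club
  (star_sub_club : forall (L : Lam -> Prop) (P : Pi -> Prop) (pi : Pi),
      star push P L pi -> club perp app P L pi)
  (t s : Lam) (pi : Pi) : perp t (push s pi) -> perp (app t s) pi.
Proof.
  intros Hp.
  apply (star_sub_club (fun x => x = s) (fun x => x = push s pi) pi).
  - intros s' ->. reflexivity.
  - exists t, s. repeat split. intros p ->. exact Hp.
Qed.

End RealizabilityLattice.

Theorem mainTheorem4 (Lam Pi : Type) (perp : Lam -> Pi -> Prop)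
  (push : Lam -> Pi -> Pi) (app : Lam -> Lam -> Lam) :
  let c1 := forall (t s : Lam) (pi : Pi), perp t (push s pi) -> perp (app t s) pi in
  let c2 := forall (L : Lam -> Prop) (P : Pi -> Prop) (pi : Pi),
      star push P L pi -> club perp app P L pi in
  let c3 := forall (L : Lam -> Prop) (P : Pi -> Prop) (pi : Pi),
      star_perp perp push P L pi -> club perp app P L pi in
  let c4 := forall (P : Pi -> Prop) (L : Lam -> Prop) (t l : Lam),
      polP perp P t -> L l ->
      (forall pi, star push P L pi -> perp (app t l) pi) /\
      (forall pi, star_bullet perp push P L pi -> perp (app t l) pi) in
  (c1 <-> c2) /\ (c1 <-> c3) /\ (c1 <-> c4).
Proof.
  intros c1 c2 c3 c4.
  assert (H13 : c1 -> c3).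
  { intros H1 L P pi. apply star_perp_sub_club, H1. }
  assert (H32 : c3 -> c2).
  { intros H3 L P pi Hs. apply H3, star_sub_star_perp, Hs. }
  assert (H21 : c2 -> c1) by exact app_push_of_star_sub_club.
  assert (H14 : c1 -> c4).
  { intros H1 P L t l Ht Hl. split.
    - exact (app_polP_star H1 Ht Hl).
    - intros pi Hb. apply (app_polP_star H1 Ht Hl), (star_bullet_sub_star Hb). }
  assert (H42 : c4 -> c2).
  { intros H4 L P pi Hs u [t [l [Ht [Hl ->]]]]. exact (proj1 (H4 P L t l Ht Hl) pi Hs). }
  split; [|split]; split; intros Hc.
  - exact (H32 (H13 Hc)).
  - exact (H21 Hc).
  - exact (H13 Hc).
  - exact (H21 (H32 Hc)).
  - exact (H14 Hc).
  - exact (H21 (H42 Hc)).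
Qed.
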